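(* Let $q$ be a prime power and $n\ge 3$ an integer. Then $$B_q(n,3,3;3)\le\left(1+\frac{1}{2\left[{3\atop 2}\right]_q-1}\right)\frac{\left[{n\atop 2}\right]_q}{\left[{3\atop 2}\right]_q}.$$
   Context: For a prime power $q$, $\mathcal{G}_q(n,k)$ denotes the set of all $k$-dimensional subspaces of $\mathbb{F}_q^n$, and the Gaussian binomial coefficient is $\left[{n\atop k}\right]_q=\prod_{i=0}^{k-1}\frac{q^n-q^i}{q^k-q^i}=|\mathcal{G}_q(n,k)|$. An $\alpha$-$(n,k,\delta)_q^c$ covering Grassmannian code is a subset $\mathcal{C}\subseteq\mathcal{G}_q(n,k)$ (no repeated codewords) such that every set of $\alpha$ distinct codewords of $\mathcal{C}$ spans a subspace of $\mathbb{F}_q^n$ of dimension at least $k+\delta$. $B_q(n,k,\delta;\alpha)$ denotes the maximum size of an $\alpha$-$(n,k,\delta)_q^c$ code. *)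

From HB Require Import structures.
From mathcomp Require Import all_boot all_order all_algebra all_field.
Set Implicit Arguments. Unset Strict Implicit. Unset Printing Implicit Defensive.
Import Order.TTheory GRing.Theory Num.Theory.
Local Open Scope ring_scope.

Definition gauss_binom (q n k : nat) : rat :=
  \prod_(i < k) ((q%:Q ^+ n - q%:Q ^+ i) / (q%:Q ^+ k - q%:Q ^+ i)).

(* An alpha-(n,k,delta)_q^c covering Grassmannian code over F, given as a
   duplicate-free list of subspaces of F^n (= row vectors 'rV[F]_n), each of
   dimension k, such that any alpha distinct codewords span a subspace of
   dimension at least k + delta. *)
Definition covering_code (F : fieldType) (n k delta alpha : nat)
    (C : seq {vspace 'rV[F]_n}) : Prop :=
  [/\ uniq C,
      (forall U, U \in C -> \dim U = k) &
      (forall S : seq {vspace 'rV[F]_n},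
          uniq S -> size S = alpha -> {subset S <= C} ->
          (k + delta <= \dim (\sum_(U <- S) U)%VS)%N)].

From HB Require Import structures.
From mathcomp Require Import all_boot all_order all_algebra all_field zify ring lra.
Import Order.TTheory GRing.Theory Num.Theory.
Set Implicit Arguments. Unset Strict Implicit. Unset Printing Implicit Defensive.

(* If three
   distinct codewords A, B, D had dim (A :&: B) >= 2 and dim (A :&: D) >= 2, then
   dim (A + B + D) <= 9 - 2 - 2 = 5 < 6.  Hence every plane lies in at most two
   codewords, and each codeword shares at most one plane with the other codewords.
   Double counting then gives 2 |C| [3 2]_q <= 2 [n 2]_q + |C|, which is the bound;
   planes are counted through their ordered bases, of which a k-dimensional space
   has (q^k - 1)(q^k - q). *)

Section SeqMembers.
Variables (T : eqType) (s : seq T).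
Hypothesis s_uniq : uniq s.

Lemma uniq_other_mem x : (1 < size s)%N -> exists2 y, y \in s & y != x.
Proof.
move=> s_gt1; apply/hasP; apply: contraLR s_gt1 => /hasPn all_x.
rewrite -leqNgt -(size_nseq 1 x); apply: uniq_leq_size => // y ys.
by rewrite mem_nseq /=; have := all_x y ys; rewrite negbK.
Qed.

Lemma uniq_three_mem : (2 < size s)%N ->
  exists x y z, [/\ x \in s, y \in s & z \in s] /\ [/\ x != y, x != z & y != z].
Proof.
move: s_uniq; case: s => [|x [|y [|z t]]] //= /and4P[] /[!inE] /[!negb_or].
case/and3P=> xy xz _ /andP[yz _] _ _ _; exists x, y, z.
by rewrite !inE !eqxx !orbT xy xz yz.
Qed.
End SeqMembers.

Section DimensionBounds.
Variables (K : fieldType) (vT : vectType K).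
Implicit Types (A B D U W : {vspace vT}) (u v w : vT).

Lemma dimv_ltn_notin W U w : (W <= U)%VS -> w \in U -> w \notin W -> (\dim W < \dim U)%N.
Proof.
move=> sWU wU wW; have [le_WU eq_WU] := dimv_leqif_sup sWU.
rewrite ltn_neqAle le_WU andbT eq_WU; apply: contra wW => /subvP; exact.
Qed.

Lemma dimv_add_line u v : u != 0%R -> v \notin <[u]>%VS -> (2 <= \dim (<[u]> + <[v]>))%N.
Proof.
move=> u0 v_u; have := dimv_ltn_notin (w := v) (addvSl <[u]> <[v]>).
by rewrite dim_vline u0; apply=> //; rewrite memvE addvSr.
Qed.

Lemma dimv_cap_ltn A B : A != B -> \dim A = \dim B -> (\dim (A :&: B) < \dim A)%N.
Proof.
move=> AB dAB; rewrite ltn_neqAle dimvS ?capvSl // andbT.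
apply: contra AB => /eqP dAB_A; have /eqP eA : (A :&: B == A)%VS.
  by rewrite eqEdim capvSl dAB_A leqnn.
by rewrite -eA eqEdim capvSr -dAB dAB_A leqnn.
Qed.

Lemma dimv_add3_cap A B D :
  (\dim (A + B + D) + \dim (A :&: B) + \dim (A :&: D) <= \dim A + \dim B + \dim D)%N.
Proof.
have sAD : (A :&: D <= (A + B) :&: D)%VS by rewrite capvS ?addvSl.
have := dimvS sAD; have := dimv_sum_cap A B; have := dimv_sum_cap (A + B) D; lia.
Qed.
End DimensionBounds.

Section IndependentPairs.
Variables (F : finFieldType) (n : nat).
Local Notation vec := 'rV[F]_n.
Local Notation q := #|F|.
Implicit Types (p : vec * vec) (U : {vspace vec}).

Definition indep_pair p := (p.1 != 0%R) && (p.2 \notin <[p.1]>%VS).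

Definition pair_span p : {vspace vec} := (<[p.1]> + <[p.2]>)%VS.

Definition pairs_in U := [set p | [&& indep_pair p, p.1 \in U & p.2 \in U]].

Lemma pairs_inE U p : (p \in pairs_in U) = indep_pair p && (pair_span p <= U)%VS.
Proof. by rewrite inE /pair_span subv_add -!memvE. Qed.

Lemma dim_pair_span p : indep_pair p -> (2 <= \dim (pair_span p))%N.
Proof. by case/andP; apply: dimv_add_line. Qed.

Lemma card_pairs_in U : #|pairs_in U| = ((q ^ \dim U - 1) * (q ^ \dim U - q))%N.
Proof.
have card_fiber u : #|[set v | (u, v) \in pairs_in U]| =
    if (u \in U) && (u != 0%R) then (q ^ \dim U - q)%N else 0%N.
  case: ifP => [/andP[uU u0] | uU0].
    have -> : [set v | (u, v) \in pairs_in U] =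
        [set v | v \in U] :\: [set v | v \in <[u]>%VS].
      by apply/setP => v; rewrite !inE /indep_pair /= uU u0 andbC.
    rewrite cardsD (setIidPr _); last first.
      by apply/subsetP => v; rewrite !inE => /vlineP[k ->]; rewrite memvZ.
    by rewrite !cardsE !card_vspace dim_vline u0 expn1.
  apply/eqP; rewrite cards_eq0; apply/eqP/setP => v; rewrite !inE /indep_pair /=.
  by apply: contraFF uU0 => /and3P[/andP[-> _] -> _].
have -> : #|pairs_in U| = (\sum_u #|[set v | (u, v) \in pairs_in U]|)%N.
  under eq_bigr do rewrite -sum1dep_card.
  by rewrite pair_big_dep -sum1_card; apply: eq_bigl => -[u v].
rewrite (eq_bigr _ (fun u _ => card_fiber u)) -big_mkcond sum_nat_const /=.
congr (_ * _)%N; move: (cardsD1 0%R [set u | u \in U]).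
rewrite inE mem0v cardsE card_vspace add1n => ->; rewrite subn1 /=.
by apply: eq_card => u; rewrite !inE andbC.
Qed.
End IndependentPairs.

Lemma sum_card_count (T : Type) (I : finType) (s : seq T) (X : T -> {set I}) :
  (\sum_(A <- s) #|X A| = \sum_i count (fun A => i \in X A) s)%N.
Proof.
under eq_bigr do rewrite -sum1_card big_mkcond.
rewrite exchange_big; apply: eq_bigr => i _.
by rewrite -sum1_count [RHS]big_mkcond.
Qed.

Lemma sum_nat_const_seq (T : Type) (s : seq T) (c : nat) : (\sum_(x <- s) c = size s * c)%N.
Proof. by rewrite big_const_seq count_predT iter_addn_0 mulnC. Qed.

Section CoveringCode.
Variables (F : finFieldType) (n : nat) (C : seq {vspace 'rV[F]_n}).
Hypothesis C_code : covering_code 3 3 3 C.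
Local Notation q := #|F|.
Implicit Types (A B D W : {vspace 'rV[F]_n}) (p : 'rV[F]_n * 'rV[F]_n).

Lemma no_codeword_triple_on_planes A B D W W' :
  A \in C -> B \in C -> D \in C -> [/\ A != B, A != D & B != D] ->
  (W <= A :&: B)%VS -> (W' <= A :&: D)%VS -> (2 <= \dim W)%N -> (2 <= \dim W')%N -> False.
Proof.
case: C_code => _ dimC span3 AC BC DC [AB AD BD] /dimvS sW /dimvS sW' dW dW'.
have := span3 [:: A; B; D]; rewrite /= !inE !negb_or AB AD BD.
rewrite !big_cons big_nil addv0 addvA => /(_ isT erefl) span_ge6.
have {span_ge6} : (6 <= \dim (A + B + D))%N.
  by apply: span_ge6 => U; rewrite !inE => /or3P[] /eqP ->.
have := dimv_add3_cap A B D; rewrite (dimC A) // (dimC B) // (dimC D) //; lia.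
Qed.

Definition pair_mult p := count (fun A => p \in pairs_in A) C.

Definition shared_pairs := [set p | (1 < pair_mult p)%N].

Lemma pair_mult_le2 p : (pair_mult p <= 2)%N.
Proof.
case: C_code => C_uniq _ _; rewrite leqNgt /pair_mult -size_filter; apply/negP.
case/(uniq_three_mem (filter_uniq _ C_uniq)) => A [B [D [[]]]].
rewrite !mem_filter !pairs_inE => /andP[/andP[ip sA] AC] /andP[/andP[_ sB] BC].
move=> /andP[/andP[_ sD] DC] distinct; apply: (no_codeword_triple_on_planes AC BC DC distinct
  (W := pair_span p) (W' := pair_span p)); by rewrite ?subv_cap ?sA ?sB ?sD ?dim_pair_span.
Qed.

Lemma other_codeword p A :
  p \in shared_pairs -> exists2 B, B \in C & (B != A) && (p \in pairs_in B).
Proof.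
case: C_code => C_uniq _ _; rewrite inE /pair_mult -size_filter.
case/(uniq_other_mem (filter_uniq _ C_uniq) A) => B; rewrite mem_filter => /andP[pB BC] BA.
by exists B; rewrite ?BA.
Qed.

Lemma second_codeword_unique A B B' p p' :
  A \in C -> B \in C -> B' \in C -> A != B -> A != B' ->
  p \in pairs_in A :&: pairs_in B -> p' \in pairs_in A :&: pairs_in B' -> B = B'.
Proof.
move=> AC BC B'C AB AB'; rewrite !in_setI !pairs_inE.
case/andP=> /andP[ip sA] /andP[_ sB] /andP[/andP[ip' sA'] /andP[_ sB']].
apply/eqP/negP => /negP BB'.
apply: (no_codeword_triple_on_planes AC BC B'C (And3 AB AB' BB')
  (W := pair_span p) (W' := pair_span p'));
  by rewrite ?subv_cap ?sA ?sB ?sA' ?sB' ?dim_pair_span.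
Qed.

Lemma card_shared_pairs_in A : A \in C ->
  (#|pairs_in A :&: shared_pairs| <= (q ^ 2 - 1) * (q ^ 2 - q))%N.
Proof.
move=> AC; have [_ dimC _] := C_code.
have [-> | [p0 /setIP[p0A p0_shared]]] := set_0Vmem (pairs_in A :&: shared_pairs).
  by rewrite cards0.
have [B0 B0C /andP[B0A p0B0]] := other_codeword A p0_shared.
have AB0 : A != B0 by rewrite eq_sym.
have [ip0 sAB0] : indep_pair p0 /\ (pair_span p0 <= A :&: B0)%VS.
  by move: p0A p0B0; rewrite !pairs_inE subv_cap => /andP[-> ->] /andP[_ ->].
have dim_cap : \dim (A :&: B0) = 2%N.
  have := dimv_cap_ltn AB0 (etrans (dimC _ AC) (esym (dimC _ B0C))).
  have := dimvS sAB0; have := dim_pair_span ip0; rewrite (dimC A) //; lia.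
rewrite -dim_cap -card_pairs_in; apply/subset_leq_card/subsetP => p /setIP[pA p_shared].
have [B BC /andP[BA pB]] := other_codeword A p_shared.
have AB : A != B by rewrite eq_sym.
have -> : B0 = B.
  by apply: (second_codeword_unique AC B0C BC AB0 AB (p := p0) (p' := p)); apply/setIP.
by move: pA pB; rewrite !pairs_inE subv_cap => /andP[-> ->] /andP[_ ->].
Qed.

Lemma pair_mult_double_count p : (2 * pair_mult p <=
  2 * (p \in pairs_in fullv) + count (fun A => p \in pairs_in A :&: shared_pairs) C)%N.
Proof.
have -> : count (fun A => p \in pairs_in A :&: shared_pairs) C =
    (pair_mult p * (p \in shared_pairs))%N.
  have [p_shared | p_not_shared] := boolP (p \in shared_pairs).
    by rewrite muln1; apply: eq_count => A; rewrite in_setI p_shared andbT.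
  rewrite muln0 (eq_count (a2 := pred0)) ?count_pred0 // => A.
  by rewrite in_setI (negbTE p_not_shared) andbF.
have [-> | mult_gt0] := posnP (pair_mult p); first by rewrite muln0.
have -> : p \in pairs_in fullv.
  move: mult_gt0; rewrite /pair_mult -has_count => /hasP[A _].
  by rewrite !pairs_inE subvf => /andP[-> _].
by have := pair_mult_le2 p; rewrite inE; case: (pair_mult p) mult_gt0 => [|[|[|]]].
Qed.

Lemma covering_double_count : (2 * (size C * ((q ^ 3 - 1) * (q ^ 3 - q))) <=
  2 * ((q ^ n - 1) * (q ^ n - q)) + size C * ((q ^ 2 - 1) * (q ^ 2 - q)))%N.
Proof.
have [_ dimC _] := C_code.
have sum_pairs_in : (\sum_(A <- C) #|pairs_in A| = size C * ((q ^ 3 - 1) * (q ^ 3 - q)))%N.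
  rewrite -sum_nat_const_seq big_seq [RHS]big_seq; apply: eq_bigr => A AC.
  by rewrite card_pairs_in dimC.
have sum_shared : (\sum_(A <- C) #|pairs_in A :&: shared_pairs| <=
    size C * ((q ^ 2 - 1) * (q ^ 2 - q)))%N.
  rewrite -sum_nat_const_seq big_seq [X in (_ <= X)%N]big_seq.
  by apply: leq_sum => A; apply: card_shared_pairs_in.
have card_all : #|pairs_in (fullv : {vspace 'rV[F]_n})| = ((q ^ n - 1) * (q ^ n - q))%N.
  by rewrite card_pairs_in dimvf dim_matrix mul1r.
rewrite -sum_pairs_in -card_all; apply: leq_trans (leq_add (leqnn _) sum_shared).
rewrite -sum1_card !sum_card_count !big_distrr [X in (_ <= X + _)%N]big_mkcond -big_split /=.
by apply: leq_sum => p _; apply: leq_trans (pair_mult_double_count p) _; case: (p \in _).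
Qed.
End CoveringCode.

Local Open Scope ring_scope.

Lemma gauss_binom_2 (q k : nat) : gauss_binom q k 2 =
  (q%:R ^+ k - 1) * (q%:R ^+ k - q%:R) / ((q%:R ^+ 2 - 1) * (q%:R ^+ 2 - q%:R)).
Proof. by rewrite /gauss_binom !big_ord_recr big_ord0 /= mul1r expr0 expr1 mulf_div. Qed.

Lemma gauss_binom_3_2 (q : nat) : (1 < q)%N -> gauss_binom q 3 2 = q%:R ^+ 2 + q%:R + 1.
Proof.
rewrite -(ltr_nat rat) gauss_binom_2 => q_gt1.
by field; apply/andP; split; apply/eqP; nra.
Qed.

Lemma double_count_bound (q n c : nat) : (1 < q)%N -> (0 < n)%N ->
  (2 * (c * ((q ^ 3 - 1) * (q ^ 3 - q))) <=
    2 * ((q ^ n - 1) * (q ^ n - q)) + c * ((q ^ 2 - 1) * (q ^ 2 - q)))%N ->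
  c%:R <= (1 + 1 / (2 * gauss_binom q 3 2 - 1)) * gauss_binom q n 2 / gauss_binom q 3 2 :> rat.
Proof.
move=> q_gt1 n_gt0; have q_le_exp k : (0 < k)%N -> (q <= q ^ k)%N.
  by move=> k_gt0; rewrite -{1}(expn1 q) leq_pexp2l // ltnW.
have exp_gt0 k : (1 <= q ^ k)%N by rewrite expn_gt0 ltnW.
rewrite -(ler_nat rat) !(natrD, natrM, natrB, natrX) ?q_le_exp ?exp_gt0 //.
rewrite gauss_binom_3_2 // gauss_binom_2; move: q_gt1; rewrite -(ltr_nat rat).
set Q := q%:R : rat; set N := (Q ^+ n - 1) * (Q ^+ n - Q) => Q_gt1 count_le.
set b := (Q ^+ 2 - 1) * (Q ^+ 2 - Q) in count_le *; set g := Q ^+ 2 + Q + 1.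
have b_gt0 : 0 < b by apply: mulr_gt0; nra.
have g2_gt0 : 0 < 2 * g - 1 by rewrite /g; nra.
have -> : (1 + 1 / (2 * g - 1)) * (N / b) / g = 2 * N / (b * (2 * g - 1)).
  by field; rewrite !lt0r_neq0 // /g; nra.
rewrite ler_pdivlMr; last exact: mulr_gt0.
have norm3 : (Q ^+ 3 - 1) * (Q ^+ 3 - Q) = b * g by rewrite /b /g; ring.
move: count_le; rewrite norm3; lra.
Qed.

Unset Implicit Arguments.
Theorem mainTheorem2 (F : finFieldType) (n : nat) (hn : (3 <= n)%N)
    (C : seq {vspace 'rV[F]_n}) (hC : @covering_code F n 3 3 3 C) :
  (size C)%:R <=
    (1 + 1 / (2 * gauss_binom #|F| 3 2 - 1)) *
    gauss_binom #|F| n 2 / gauss_binom #|F| 3 2 :> rat.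
Proof.
apply: double_count_bound (finNzRing_gt1 F) _ (covering_double_count hC).
exact: leq_trans hn.
Qed.
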